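(* Let $\succeq$ be a preference order on $\mathcal L^\infty(\Omega,\mathcal F)$ satisfying (SM), (PC) and (ST), let $\mathcal G\subseteq\mathcal F$ be a sub-$\sigma$-algebra and $f\in\mathcal L^\infty(\Omega,\mathcal F)$. Then $\mathfrak m(f\mid\mathcal G)\neq\varnothing$, and for any $g,\tilde g\in\mathfrak m(f\mid\mathcal G)$ one has $\{g\neq\tilde g\}\in\mathcal N_\succeq$.
   Context: $\mathcal L^\infty(\Omega,\mathcal F)$: bounded $\mathcal F$-measurable real functions. Preference order: complete transitive relation; $\succ,\sim$ as usual. Null events $\mathcal N_\succeq=\{A\in\mathcal F: f1_A+g1_{A^c}\sim g\ \forall f,g\}$. (SM): for $A\notin\mathcal N_\succeq$, every $f$ and constants $x>y$: $x1_A+f1_{A^c}\succ y1_A+f1_{A^c}$. (ST): if $f1_A+h1_{A^c}\succeq g1_A+h1_{A^c}$ then $f1_A+\tilde h1_{A^c}\succeq g1_A+\tilde h1_{A^c}$ for every $\tilde h$. (PC): for uniformly bounded $f_n\to f$ pointwise and $g\succ f$ (resp. $f\succ g$) there is $N$ with $g\succ f_n$ (resp. $f_n\succ g$) for $n>N$. Conditional Chisini mean: $\mathfrak m(f\mid\mathcal G)=\{g\in\mathcal L^\infty(\Omega,\mathcal G): f1_A\sim g1_A\ \forall A\in\mathcal G\}$. *)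

From HB Require Import structures.
From mathcomp Require Import all_boot all_order all_algebra.
From mathcomp Require Import all_classical all_reals all_analysis.
Set Implicit Arguments. Unset Strict Implicit. Unset Printing Implicit Defensive.
Import Order.TTheory GRing.Theory Num.Theory numFieldNormedType.Exports.
Local Open Scope classical_set_scope.
Local Open Scope ring_scope.

Section Chisini.
Context {R : realType} {Omega : Type}.

Definition measurable_wrt (F : set (set Omega)) (f : Omega -> R) : Prop :=
  forall B : set R, @measurable _ (measurableTypeR R) B -> F (f @^-1` B).

Definition Linf (F : set (set Omega)) (f : Omega -> R) : Prop :=
  measurable_wrt F f /\ exists M : R, forall w, `|f w| <= M.

Definition glue (f : Omega -> R) (A : set Omega) (g : Omega -> R) : Omega -> R :=
  fun w => f w * \1_A w + g w * \1_(~` A) w.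

Definition cst (x : R) : Omega -> R := fun _ => x.

Section Pref.
Variables (F : set (set Omega)) (pref : (Omega -> R) -> (Omega -> R) -> Prop).

Definition pref_sim f g := pref f g /\ pref g f.
Definition pref_strict f g := pref f g /\ ~ pref g f.

Definition preference_order : Prop :=
  (forall f g, Linf F f -> Linf F g -> pref f g \/ pref g f) /\
  (forall f g h, Linf F f -> Linf F g -> Linf F h ->
     pref f g -> pref g h -> pref f h).

Definition null_events : set (set Omega) :=
  [set A | F A /\ forall f g, Linf F f -> Linf F g ->
                   pref_sim (glue f A g) g].

Definition SM : Prop :=
  forall A, F A -> ~ null_events A ->
  forall f (x y : R), Linf F f -> x > y ->
    pref_strict (glue (cst x) A f) (glue (cst y) A f).

Definition ST : Prop :=
  forall A f g h h', F A -> Linf F f -> Linf F g -> Linf F h -> Linf F h' ->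
    pref (glue f A h) (glue g A h) -> pref (glue f A h') (glue g A h').

Definition PC : Prop :=
  forall (fs : nat -> Omega -> R) (f g : Omega -> R),
    (forall n, Linf F (fs n)) -> Linf F f -> Linf F g ->
    (exists M : R, forall n w, `|fs n w| <= M) ->
    (forall w, (fun n => fs n w) @ \oo --> f w) ->
    (pref_strict g f -> exists N, forall n, (N < n)%N -> pref_strict g (fs n)) /\
    (pref_strict f g -> exists N, forall n, (N < n)%N -> pref_strict (fs n) g).

Definition chisini_mean (f : Omega -> R) (G : set (set Omega)) : set (Omega -> R) :=
  [set g | Linf G g /\
     forall A, G A -> pref_sim (f \* \1_A) (g \* \1_A)].

End Pref.
End Chisini.

From Pilot Require Import Defs.
From HB Require Import structures.
From mathcomp Require Import all_boot all_order all_algebra.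
From mathcomp Require Import all_classical all_reals all_analysis.
From mathcomp Require Import measurable_realfun lra zify.
Import Order.TTheory GRing.Theory Num.Theory numFieldNormedType.Exports.
Local Open Scope classical_set_scope.
Local Open Scope ring_scope.
Set Implicit Arguments. Unset Strict Implicit. Unset Printing Implicit Defensive.
Local Notation glue := Defs.glue.

(* By (SM), (ST) and (PC) the preference is monotone for the pointwise order (first
   for finitely-valued functions, then through grid approximations), strictly so off
   null events, and the null events form a sigma-ideal.  Unless Omega itself is null,
   every h in L^oo has a certainty equivalent [ceq h], and [weight B := ceq 1_B] is
   positive on non-null events and small along disjoint sequences, which yields a
   greedy exhaustion principle.
   The conditional mean is a [ceq]-maximal element g of the class of G-measurable h
   with f 1_A ≿ h 1_A for all A in G, a class closed under max and under bounded
   monotone limits.  Raising g by e on a non-null A in G contradicts maximality, so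
   exhausting any A in G by events B with (g + e) 1_B ≿ f 1_B gives (g + e) 1_A ≿ f 1_A,
   and (PC) lets e tend to 0.  Two conditional means agree off a null event: on
   B := {g' < g} strict monotonicity would give g 1_B ≻ g' 1_B, whereas both are
   indifferent to f 1_B. *)

Section Measurability.
Variables (R : realType) (Omega : pointedType) (H : set (set Omega)).
Hypothesis sH : sigma_algebra setT H.
Local Notation T := (g_sigma_algebraType H).
Local Notation LH := (@Linf R Omega H).

Lemma sigmaE (A : set Omega) : H A <-> @measurable _ T A.
Proof. by rewrite /measurable /= (sigma_algebra_id sH). Qed.

Lemma measurable_wrtE (f : Omega -> R) :
  measurable_wrt H f <-> measurable_fun setT (f : T -> R).
Proof.
split=> [mf _ B mB|mf B mB]; last have := mf measurableT B mB;
  rewrite setTI /measurable /= (sigma_algebra_id sH) //; exact: mf.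
Qed.

Lemma sigma0 : H set0. Proof. exact/sigmaE/measurable0. Qed.
Lemma sigmaT : H setT. Proof. exact/sigmaE/measurableT. Qed.
Lemma sigmaC A : H A -> H (~` A). Proof. by move/sigmaE/measurableC/sigmaE. Qed.
Lemma sigmaI A B : H A -> H B -> H (A `&` B).
Proof. by move=> /sigmaE mA /sigmaE mB; exact/sigmaE/measurableI. Qed.
Lemma sigmaU A B : H A -> H B -> H (A `|` B).
Proof. by move=> /sigmaE mA /sigmaE mB; exact/sigmaE/measurableU. Qed.
Lemma sigmaD A B : H A -> H B -> H (A `\` B).
Proof. by move=> /sigmaE mA /sigmaE mB; exact/sigmaE/measurableD. Qed.
Lemma sigma_bigcup (A : nat -> set Omega) : (forall n, H (A n)) -> H (\bigcup_n A n).
Proof. by move=> mA; apply/sigmaE/bigcupT_measurable => n; exact/sigmaE. Qed.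

Lemma Linf_measurable f : LH f -> measurable_fun setT (f : T -> R).
Proof. by case=> /measurable_wrtE. Qed.

Lemma Linf_of_bounded f M :
  measurable_fun setT (f : T -> R) -> (forall w, `|f w| <= M) -> LH f.
Proof. by move=> mf fM; split; [exact/measurable_wrtE|exists M]. Qed.

Lemma Linf_cst (x : R) : LH (cst x).
Proof. exact: (@Linf_of_bounded _ `|x|) (measurable_cst _) _. Qed.

Lemma Linf_indic A : H A -> LH (\1_A).
Proof.
move=> /sigmaE mA; apply: (@Linf_of_bounded _ 1); first exact: measurable_indic.
by move=> w; rewrite indicE; case: (w \in A); rewrite ?normr1 ?normr0.
Qed.

Lemma Linf_add f g : LH f -> LH g -> LH (f \+ g).
Proof.
move=> Lf Lg; have [_ [Mf hf]] := Lf; have [_ [Mg hg]] := Lg.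
apply: (@Linf_of_bounded _ (Mf + Mg)); first by apply: measurable_funD; exact: Linf_measurable.
by move=> w; rewrite (le_trans (ler_normD _ _)) ?lerD.
Qed.

Lemma Linf_opp f : LH f -> LH (\- f).
Proof.
move=> Lf; have [_ [M hM]] := Lf; apply: (@Linf_of_bounded _ M) => [|w]; last by rewrite normrN.
by apply: measurable_funN; exact: Linf_measurable.
Qed.

Lemma Linf_mul f g : LH f -> LH g -> LH (f \* g).
Proof.
move=> Lf Lg; have [_ [Mf hf]] := Lf; have [_ [Mg hg]] := Lg.
apply: (@Linf_of_bounded _ (Mf * Mg)); first by apply: measurable_funM; exact: Linf_measurable.
by move=> w; rewrite normrM ler_pM.
Qed.

Lemma Linf_max f g : LH f -> LH g -> LH (f \max g).
Proof.
move=> Lf Lg; have [_ [Mf hf]] := Lf; have [_ [Mg hg]] := Lg.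
apply: (@Linf_of_bounded _ (Mf + Mg)); first by apply: measurable_maxr; exact: Linf_measurable.
move=> w /=; have := normr_ge0 (f w); have := normr_ge0 (g w).
by case: (ltP (f w) (g w)); have := hf w; have := hg w; lra.
Qed.

Lemma Linf_min f g : LH f -> LH g -> LH (f \min g).
Proof.
move=> Lf Lg; have [_ [Mf hf]] := Lf; have [_ [Mg hg]] := Lg.
apply: (@Linf_of_bounded _ (Mf + Mg)); first by apply: measurable_minr; exact: Linf_measurable.
move=> w /=; have := normr_ge0 (f w); have := normr_ge0 (g w).
by case: (ltP (f w) (g w)); have := hf w; have := hg w; lra.
Qed.

Lemma Linf_glue f A g : H A -> LH f -> LH g -> LH (glue f A g).
Proof.
move=> HA Lf Lg; apply: Linf_add; apply: Linf_mul => //; apply: Linf_indic => //.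
exact: sigmaC.
Qed.

Lemma Linf_comp_nondecreasing (phi : R -> R) f :
  {homo phi : x y / x <= y} -> LH f -> LH (phi \o f).
Proof.
move=> phi_nd Lf; have [_ [M hM]] := Lf.
apply: (@Linf_of_bounded _ (`|phi (- M)| + `|phi M|)).
  apply: measurableT_comp; last exact: Linf_measurable.
  exact: nondecreasing_measurable.
move=> w /=; move: (hM w); rewrite ler_norml => /andP[lo hi].
have := phi_nd _ _ lo; have := phi_nd _ _ hi.
have := ler_norm (phi M); have := ler_norm (- phi (- M)); rewrite normrN.
have := normr_ge0 (phi M); have := normr_ge0 (phi (- M)).
rewrite ler_norml; lra.
Qed.

Lemma Linf_cvg (fs : nat -> Omega -> R) f M :
  (forall n, LH (fs n)) -> (forall w, `|f w| <= M) ->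
  (forall w, fs ^~ w @ \oo --> f w) -> LH f.
Proof.
move=> Lfs fM cvf; apply: (@Linf_of_bounded _ M) => //.
by apply: (@measurable_fun_cvg _ T R setT fs f) => [n|w _]; [exact: Linf_measurable|exact: cvf].
Qed.

Lemma sigma_lt f g : LH f -> LH g -> H [set w | f w < g w].
Proof.
move=> Lf Lg; have [mgf _] := Linf_add Lg (Linf_opp Lf).
have := mgf `]0, +oo[%classic (measurable_itv _); congr H.
by apply/seteqP; split=> w /=; rewrite in_itv /= andbT subr_gt0.
Qed.

Lemma sigma_neq f g : LH f -> LH g -> H [set w | f w != g w].
Proof.
move=> Lf Lg; have -> : [set w | f w != g w] = [set w | f w < g w] `|` [set w | g w < f w].
  by apply/seteqP; split=> w /=; rewrite neq_lt => /orP.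
by apply: sigmaU; exact: sigma_lt.
Qed.

Lemma sigma_eq f (a : R) : LH f -> H [set w | f w = a].
Proof.
move=> Lf; have := sigmaC (sigma_neq Lf (Linf_cst a)); congr H.
by apply/seteqP; split=> w /=; [move/negP; rewrite negbK => /eqP|move=> ->; rewrite eqxx].
Qed.

End Measurability.

Lemma Linf_sub (R : realType) (Omega : Type) (G F : set (set Omega)) (g : Omega -> R) :
  G `<=` F -> Linf G g -> Linf F g.
Proof. by move=> GF [mg bg]; split=> // B mB; exact/GF/mg. Qed.

Section Glue.
Variables (R : realType) (Omega : Type).
Implicit Types (f g : Omega -> R) (A B : set Omega).

Lemma glueE f A g w : glue f A g w = if w \in A then f w else g w.
Proof.
by rewrite /glue !indicE in_setC; case: (w \in A); rewrite /= ?(mulr1, mulr0, addr0, add0r).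
Qed.

Lemma glue_set0 f g : glue f set0 g = g.
Proof. by apply/funext => w; rewrite glueE in_set0. Qed.

Lemma glue_setT f g : glue f setT g = f.
Proof. by apply/funext => w; rewrite glueE in_setT. Qed.

Lemma glueU f A B g : glue f (A `|` B) g = glue f A (glue f B g).
Proof. by apply/funext => w; rewrite !glueE in_setU; case: (w \in A). Qed.

Lemma glue_id f A B g : A `<=` B -> glue (glue f A g) B g = glue f A g.
Proof.
move=> AB; apply/funext => w; rewrite !glueE.
by case: (boolP (w \in A)) => [/set_mem/AB/mem_set ->|_]; case: (w \in B).
Qed.

Lemma mul_indicE f A : f \* \1_A = glue f A (cst 0).
Proof.
by apply/funext => w; rewrite glueE /= indicE; case: (w \in A); rewrite ?(mulr1, mulr0).
Qed.

Lemma mul_indic_glueD f A U : U `<=` A -> f \* \1_A = glue (f \* \1_A) (A `\` U) (f \* \1_U).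
Proof.
move=> UA; apply/funext => w; rewrite glueE /= !indicE.
case: (boolP (w \in A `\` U)) => [/set_mem [/mem_set -> _] //|/negP nAUw].
case: (boolP (w \in U)) => [/set_mem/UA/mem_set -> //|/negP nUw].
case: (boolP (w \in A)) => // /set_mem Aw; case: nAUw; apply/mem_set.
by split=> // /mem_set /nUw.
Qed.

Lemma glue_bound f A g M N : (forall w, `|f w| <= M) -> (forall w, `|g w| <= N) ->
  forall w, `|glue f A g w| <= Num.max M N.
Proof. by move=> fM gN w; rewrite glueE le_max; case: (w \in A); rewrite ?fM ?gN ?orbT. Qed.

End Glue.

Definition bounded_cvg (R : realType) (Omega : Type)
  (fs : nat -> Omega -> R) (f : Omega -> R) : Prop :=
  (exists M, forall n w, `|fs n w| <= M) /\ forall w, fs ^~ w @ \oo --> f w.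

Lemma cvg_eventually_cst (R : realType) (u : nat -> R) c N :
  (forall n, (N <= n)%N -> u n = c) -> u @ \oo --> c.
Proof. by move=> uc; apply: cvg_near_cst; exists N => // n /= /uc. Qed.

Lemma bounded_cvg_approx (R : realType) (Omega : Type) (fs : nat -> Omega -> R) f M :
  (forall w, `|f w| <= M) -> (forall n w, `|fs n w - f w| <= n.+1%:R^-1) ->
  bounded_cvg fs f.
Proof.
move=> fM close; split=> [|w].
  exists (1 + M) => n w; rewrite -[fs n w](subrK (f w)) (le_trans (ler_normD _ _)) //.
  rewrite lerD // (le_trans (close n w)) // invf_le1 ?ltr0n ?ler1n //.
apply: (@squeeze_cvgr _ _ _ _ (fun n => f w - harmonic n) (fun n => f w + harmonic n)).
- by apply: nearW => n; move: (close n w); rewrite ler_distl.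
- by rewrite -[X in _ --> X]subr0; apply: cvgB; [exact: cvg_cst|exact: cvg_harmonic].
- by rewrite -[X in _ --> X]addr0; apply: cvgD; [exact: cvg_cst|exact: cvg_harmonic].
Qed.

Lemma bounded_cvg_shift (R : realType) (Omega : Type) (f : Omega -> R) M s :
  (forall w, `|f w| <= M) -> `|s| <= 1 ->
  bounded_cvg (fun n => f \+ cst (s * n.+1%:R^-1)) f.
Proof.
move=> fM s1; apply: bounded_cvg_approx fM _ => n w.
rewrite /= addrAC subrr add0r normrM [`|_^-1|]ger0_norm ?invr_ge0 ?ler0n //.
by apply: ler_piMl; rewrite ?invr_ge0 ?ler0n.
Qed.

Lemma bounded_cvg_cst_shift (R : realType) (Omega : Type) (c s : R) : `|s| <= 1 ->
  bounded_cvg (fun n => cst (c + s * n.+1%:R^-1) : Omega -> R) (cst c).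
Proof. exact: (@bounded_cvg_shift _ _ (cst c) `|c|). Qed.

Lemma le_of_harmonic (R : realType) (a b : R) : (forall n, a - n.+1%:R^-1 <= b) -> a <= b.
Proof.
move=> ab; have cva : (fun n => a - harmonic n) @ \oo --> a.
  by rewrite -[X in _ --> X]subr0; apply: cvgB; [exact: cvg_cst|exact: cvg_harmonic].
by rewrite -(cvg_lim _ cva) //; apply: limr_le; [exact: cvgP cva|exact: nearW].
Qed.

Lemma bounded_cvg_glue (R : realType) (Omega : Type) (A : nat -> set Omega)
    (f g : Omega -> R) M N :
  (forall w, `|f w| <= M) -> (forall w, `|g w| <= N) ->
  bounded_cvg (fun m => glue f (\bigcup_(i < m) A i) g) (glue f (\bigcup_i A i) g).
Proof.
move=> fM gN; split=> [|w]; first by exists (Num.max M N) => m; exact: glue_bound.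
case: (boolP (w \in \bigcup_i A i)) => [/set_mem [k _ Akw]|wU].
  apply: (@cvg_eventually_cst _ _ _ k.+1) => m km.
  by rewrite !glueE !mem_set //; exists k.
apply: (@cvg_eventually_cst _ _ _ 0) => m _; rewrite !glueE (negbTE wU).
case: (boolP (w \in _)) => // /set_mem [k _ Akw].
by move: wU; rewrite mem_set //; exists k.
Qed.

Lemma mul_indic_le (R : realType) (Omega : Type) (h k : Omega -> R) A :
  (forall w, h w <= k w) -> forall w, (h \* \1_A) w <= (k \* \1_A) w.
Proof. by move=> hk w; rewrite /= indicE; case: (w \in A); rewrite ?mulr1 ?mulr0. Qed.

Lemma bounded_cvg_mul_indic (R : realType) (Omega : Type) (hs : nat -> Omega -> R) g A :
  bounded_cvg hs g -> bounded_cvg (fun n => hs n \* \1_A) (g \* \1_A).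
Proof.
move=> [[M hM] cv]; split=> [|w].
  exists M => n w; rewrite /= indicE; case: (w \in A); rewrite ?mulr1 ?mulr0 ?normr0 //.
  exact: le_trans (normr_ge0 _) (hM n w).
rewrite /= indicE; case: (w \in A); last first.
  by rewrite mulr0; under eq_fun do rewrite mulr0; exact: cvg_cst.
by rewrite mulr1; under eq_fun do rewrite mulr1; exact: cv.
Qed.

Lemma bigcup_lt0 (T : Type) (A : nat -> set T) : \bigcup_(i < 0) A i = set0.
Proof. by rewrite II0 bigcup_set0. Qed.

Lemma bigcup_ltS (T : Type) (A : nat -> set T) m :
  \bigcup_(i < m.+1) A i = \bigcup_(i < m) A i `|` A m.
Proof. by rewrite IIS bigcup_setU bigcup_set1. Qed.

(** * Grid approximation *)

Lemma int_range_mem (i : int) (K : nat) : (`|i| <= K)%N ->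
  i \in [seq k%:Z - K%:Z | k <- iota 0 (K + K).+1].
Proof. move=> iK; apply/mapP; exists (absz (i + K%:Z)); [rewrite mem_iota /=|]; lia. Qed.

Section GridApproximation.
Variable R : realType.
Implicit Types (n : nat) (x y : R).

Definition grid_lower n x : R := (Num.floor (n.+1%:R * x))%:~R / n.+1%:R.
Definition grid_upper n x : R := grid_lower n x + n.+1%:R^-1.

Lemma grid_lower_le n x : grid_lower n x <= x.
Proof. by rewrite /grid_lower ler_pdivrMr ?ltr0n // mulrC Num.Theory.floor_le. Qed.

Lemma grid_lower_gt n x : x - n.+1%:R^-1 < grid_lower n x.
Proof.
have n0 : n.+1%:R != 0 :> R by rewrite pnatr_eq0.
have -> : x - n.+1%:R^-1 = (n.+1%:R * x - 1) / n.+1%:R.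
  by rewrite mulrBl mulrAC mulfV // !mul1r.
rewrite /grid_lower ltr_pM2r ?invr_gt0 ?ltr0n // ltrBlDr.
by have := Num.Theory.floorD1_gt (n.+1%:R * x); rewrite rmorphD /= rmorph1.
Qed.

Lemma grid_lower_dist n x : `|grid_lower n x - x| <= n.+1%:R^-1.
Proof.
have := grid_lower_le n x; have := grid_lower_gt n x.
rewrite ler_distl; set e := n.+1%:R^-1; move=> ? ?; apply/andP; split; lra.
Qed.

Lemma grid_upper_ge n x : x <= grid_upper n x.
Proof. by rewrite /grid_upper -lerBlDr ltW // grid_lower_gt. Qed.

Lemma grid_upper_dist n x : `|grid_upper n x - x| <= n.+1%:R^-1.
Proof.
have := grid_lower_le n x; have := grid_lower_gt n x.
rewrite /grid_upper ler_distl; set e := n.+1%:R^-1; move=> ? ?; apply/andP; split; lra.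
Qed.

Lemma grid_lower_nondecreasing n : {homo grid_lower n : x y / x <= y}.
Proof.
move=> x y xy; rewrite /grid_lower ler_pM2r ?invr_gt0 ?ltr0n // ler_int.
by apply: Num.Theory.le_floor; rewrite ler_pM2l ?ltr0n.
Qed.

Lemma grid_upper_nondecreasing n : {homo grid_upper n : x y / x <= y}.
Proof. by move=> x y xy; rewrite /grid_upper lerD2r grid_lower_nondecreasing. Qed.

Lemma grid_lower_finite n M : exists s : seq R,
  forall x, `|x| <= M -> grid_lower n x \in s.
Proof.
pose K := Num.bound (n.+1%:R * M + 1).
exists [seq i%:~R / n.+1%:R | i <- [seq k%:Z - K%:Z | k <- iota 0 (K + K).+1]].
move=> x xM; apply/mapP; exists (Num.floor (n.+1%:R * x)) => //; apply: int_range_mem.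
set z := n.+1%:R * x.
have zM : `|z| <= n.+1%:R * M by rewrite /z normrM ger0_norm ?ler_pM2l ?ltr0n.
have M0 : 0 <= n.+1%:R * M + 1 by rewrite addr_ge0 // (le_trans _ zM).
have := Num.Theory.archi_boundP M0; rewrite -/K => Kb.
rewrite -(@ler_nat R) natr_absz intr_norm.
have := Num.Theory.floor_le z; have := Num.Theory.floorD1_gt z.
rewrite rmorphD /= rmorph1 => z1 z2.
rewrite ltW // (le_lt_trans _ Kb) //.
by move: zM; rewrite !ler_norml => /andP[? ?]; apply/andP; split; lra.
Qed.

Lemma grid_upper_finite n M : exists s : seq R,
  forall x, `|x| <= M -> grid_upper n x \in s.
Proof.
have [s sP] := grid_lower_finite n M.
by exists [seq y + n.+1%:R^-1 | y <- s] => x /sP; exact: map_f.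
Qed.

End GridApproximation.


(** * Monotonicity and null events *)

Section Preference.
Variables (R : realType) (Omega : pointedType) (F : set (set Omega)).
Hypothesis sF : sigma_algebra setT F.
Variable pref : (Omega -> R) -> (Omega -> R) -> Prop.
Hypotheses (PO : preference_order F pref) (HSM : SM F pref) (HPC : PC F pref)
  (HST : ST F pref).
Local Notation L := (@Linf R Omega F).
Local Notation sim := (pref_sim pref).
Local Notation strict := (pref_strict pref).
Local Notation null := (null_events F pref).
Let Lcst x : L (cst x). Proof. exact: Linf_cst. Qed.
Local Hint Resolve Lcst : core.
Local Notation Lglue := (Linf_glue sF).

Lemma pref_refl f : L f -> pref f f.
Proof. by move=> Lf; case: (PO.1 f f Lf Lf). Qed.

Lemma pref_trans g f h : L f -> L g -> L h -> pref f g -> pref g h -> pref f h.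
Proof. exact: PO.2. Qed.

Lemma not_pref_strict f g : L f -> L g -> ~ pref f g -> strict g f.
Proof. by move=> Lf Lg nfg; split=> //; case: (PO.1 f g Lf Lg). Qed.

Lemma strict_pref_trans g f h : L f -> L g -> L h -> strict f g -> pref g h -> strict f h.
Proof.
move=> Lf Lg Lh [fg ngf] gh; split; first exact: pref_trans fg gh.
by move=> hf; apply: ngf; exact: pref_trans gh hf.
Qed.

Lemma pref_strict_trans g f h : L f -> L g -> L h -> pref f g -> strict g h -> strict f h.
Proof.
move=> Lf Lg Lh fg [gh nhg]; split; first exact: pref_trans fg gh.
by move=> hf; apply: nhg; exact: pref_trans hf fg.
Qed.

Lemma sim_trans g f h : L f -> L g -> L h -> sim f g -> sim g h -> sim f h.
Proof.
by move=> Lf Lg Lh [fg gf] [gh hg]; split; [exact: pref_trans fg gh|exact: pref_trans hg gf].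
Qed.

Lemma null_glue N f g : null N -> L f -> L g -> sim (glue f N g) g.
Proof. by case=> _; apply. Qed.

Lemma null_set0 : null set0.
Proof.
split=> [|f g Lf Lg]; first exact: (sigma0 sF).
by rewrite glue_set0; split; exact: pref_refl.
Qed.

Lemma null_subset N A : null N -> F A -> A `<=` N -> null A.
Proof.
move=> nN FA AN; split=> // f g Lf Lg.
by rewrite -(glue_id f g AN); apply: (null_glue nN) => //; exact: Lglue.
Qed.

Lemma null_setU A B : null A -> null B -> null (A `|` B).
Proof.
move=> nA nB; have [FA _] := nA; have [FB _] := nB.
split=> [|f g Lf Lg]; first exact: (sigmaU sF).
have LfBg : L (glue f B g) by exact: Lglue.
rewrite glueU; apply: (sim_trans (g := glue f B g)) => //; first exact: Lglue.
  exact: (null_glue nA).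
exact: (null_glue nB).
Qed.

Lemma PC_strict_l fs f g : (forall n, L (fs n)) -> L f -> L g -> bounded_cvg fs f ->
  strict g f -> exists n, strict g (fs n).
Proof.
move=> Lfs Lf Lg [bd cv] /((HPC Lfs Lf Lg bd cv).1) [N gfs].
by exists N.+1; exact: gfs.
Qed.

Lemma PC_strict_r fs f g : (forall n, L (fs n)) -> L f -> L g -> bounded_cvg fs f ->
  strict f g -> exists n, strict (fs n) g.
Proof.
move=> Lfs Lf Lg [bd cv] /((HPC Lfs Lf Lg bd cv).2) [N fsg].
by exists N.+1; exact: fsg.
Qed.

Lemma cvg_pref_l fs f g : (forall n, L (fs n)) -> L f -> L g -> bounded_cvg fs f ->
  (forall n, pref (fs n) g) -> pref f g.
Proof.
move=> Lfs Lf Lg cvf fsg; apply: contrapT => /(not_pref_strict Lf Lg) gf.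
by have [n [_]] := PC_strict_l Lfs Lf Lg cvf gf; apply.
Qed.

Lemma cvg_pref_r fs f g : (forall n, L (fs n)) -> L f -> L g -> bounded_cvg fs f ->
  (forall n, pref g (fs n)) -> pref g f.
Proof.
move=> Lfs Lf Lg cvf gfs; apply: contrapT => /(not_pref_strict Lg Lf) fg.
by have [n [_]] := PC_strict_r Lfs Lf Lg cvf fg; apply.
Qed.

Lemma cvg_sim fs f g : (forall n, L (fs n)) -> L f -> L g -> bounded_cvg fs f ->
  (forall n, sim (fs n) g) -> sim f g.
Proof.
move=> Lfs Lf Lg cvf fsg.
by split; [apply: cvg_pref_l cvf _|apply: cvg_pref_r cvf _] => // n; case: (fsg n).
Qed.

Lemma null_bigcup (A : nat -> set Omega) : (forall n, null (A n)) -> null (\bigcup_n A n).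
Proof.
move=> nA; have FA n : F (A n) by case: (nA n).
have nAlt m : null (\bigcup_(i < m) A i).
  by elim: m => [|m IH]; rewrite ?bigcup_lt0 ?bigcup_ltS; [exact: null_set0|exact: null_setU].
split=> [|f g Lf Lg]; first exact: (sigma_bigcup sF).
have [[_ [Mf fM]] [_ [Mg gM]]] := (Lf, Lg).
apply: cvg_sim (bounded_cvg_glue A fM gM) _ => //.
- by move=> m; apply: Lglue => //; case: (nAlt m).
- by apply: Lglue => //; exact: (sigma_bigcup sF).
- by move=> m; exact: (null_glue (nAlt m)).
Qed.

(* Induction on the value pairs: on the level set {f = a, g = b}, raising g to a is
   weakly preferred, by (SM) if the level set is not null. *)
Lemma pref_of_le_pairs (s : seq (R * R)) f : L f -> forall g, L g ->
  (forall w, g w <= f w) -> (forall w, f w != g w -> (f w, g w) \in s) -> pref f g.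
Proof.
move=> Lf; elim: s => [|[a b] s IH] g Lg gf gs.
  suff -> : g = f by exact: pref_refl.
  by apply/funext => w; apply/eqP; apply: contraT; rewrite eq_sym => /gs.
pose E := [set w | f w = a] `&` [set w | g w = b].
have FE : F E by apply: (sigmaI sF); exact: (sigma_eq sF).
have Lg' : L (glue (cst a) E g) by exact: Lglue.
apply: (pref_trans (g := glue (cst a) E g)) => //.
  apply: IH => // w; rewrite glueE; case: (boolP (w \in E)) => [/set_mem [-> _]|wE] //.
  - by rewrite eqxx.
  - by move=> /gs; rewrite in_cons => /orP[/eqP [fa gb]|//]; move: wE; rewrite mem_set.
have [ba|ab] := ltP b a.
  have [nE|nnE] := pselect (null E); first exact: (null_glue nE _ Lg).1.
  suff {2}<- : glue (cst b) E g = g by exact: (HSM FE nnE Lg ba).1.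
  by apply/funext => w; rewrite glueE; case: (boolP (w \in E)) => // /set_mem [_ ->].
suff -> : glue (cst a) E g = g by exact: pref_refl.
apply/funext => w; rewrite glueE; case: (boolP (w \in E)) => // /set_mem [fa gb].
by apply/eqP; rewrite /= gb eq_le ab -gb -fa gf.
Qed.

Lemma pref_of_le_finite (s t : seq R) f g : L f -> L g -> (forall w, g w <= f w) ->
  (forall w, f w \in s) -> (forall w, g w \in t) -> pref f g.
Proof.
move=> Lf Lg gf fs gt; apply: (pref_of_le_pairs (s := [seq (x, y) | x <- s, y <- t])) => // w _.
exact: allpairs_f.
Qed.

(* If g were strictly preferred to f, (PC) would transfer this to finitely-valued
   approximations of f from above and of g from below. *)
Lemma pref_of_le f g : L f -> L g -> (forall w, g w <= f w) -> pref f g.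
Proof.
move=> Lf Lg gf; apply: contrapT => /(not_pref_strict Lf Lg) gsf.
have [[_ [Mf fM]] [_ [Mg gM]]] := (Lf, Lg).
pose fs n := grid_upper n \o f; pose gs m := grid_lower m \o g.
have Lfs n : L (fs n) by apply: Linf_comp_nondecreasing => //; exact: grid_upper_nondecreasing.
have Lgs m : L (gs m) by apply: Linf_comp_nondecreasing => //; exact: grid_lower_nondecreasing.
have cvf := bounded_cvg_approx fM (fun n w => grid_upper_dist n (f w)).
have cvg := bounded_cvg_approx gM (fun m w => grid_lower_dist m (g w)).
have [n gsfn] := PC_strict_l Lfs Lf Lg cvf gsf.
have [m [_]] := PC_strict_r Lgs Lg (Lfs n) cvg gsfn.
apply; have [s sP] := grid_upper_finite n Mf; have [t tP] := grid_lower_finite m Mg.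
apply: (pref_of_le_finite (s := s) (t := t)) => // w.
- exact: le_trans (grid_lower_le _ _) (le_trans (gf w) (grid_upper_ge _ _)).
- exact: sP.
- exact: tP.
Qed.

Lemma strict_of_le_gap f g (x y : R) : L f -> L g -> (forall w, g w <= f w) -> x < y ->
  ~ null ([set w | g w < x] `&` [set w | y < f w]) -> strict f g.
Proof.
move=> Lf Lg gf xy; set C := [set w | g w < x] `&` [set w | y < f w]; move=> nC.
have FC : F C.
  by apply: (sigmaI sF); [exact: (sigma_lt sF Lg (Lcst x))|exact: (sigma_lt sF (Lcst y) Lf)].
have Ly : L (glue (cst y) C g) by exact: Lglue.
have Lx : L (glue (cst x) C g) by exact: Lglue.
apply: (pref_strict_trans (g := glue (cst y) C g)) => //.
  by apply: pref_of_le => // w; rewrite glueE; case: (boolP (w \in C)) => // /set_mem [_ /ltW].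
apply: (strict_pref_trans (g := glue (cst x) C g)) => //; first exact: (HSM FC nC Lg xy).
by apply: pref_of_le => // w; rewrite glueE; case: (boolP (w \in C)) => // /set_mem [/ltW].
Qed.

Lemma strict_of_le f g : L f -> L g -> (forall w, g w <= f w) ->
  ~ null [set w | g w < f w] -> strict f g.
Proof.
move=> Lf Lg gf nlt.
pose gap (qr : rat * rat) := [set w | g w < ratr qr.1] `&` [set w | ratr qr.2 < f w].
have [qr qr_lt ngap] : exists2 qr : rat * rat, ratr qr.1 < ratr qr.2 :> R & ~ null (gap qr).
  apply: contrapT => allnull; apply: nlt.
  pose A m := if unpickle m is Some qr then
    if ratr qr.1 < ratr qr.2 :> R then gap qr else set0 else set0.
  apply: (null_subset (N := \bigcup_m A m)).
  - apply: null_bigcup => m; rewrite /A; case: (unpickle m) => [qr|]; last exact: null_set0.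
    case: ifP => [qr_lt|_]; last exact: null_set0.
    by apply: contrapT => ngap; apply: allnull; exists qr.
  - exact: (sigma_lt sF).
  - move=> w /= gfw; have [q] := rat_in_itvoo gfw; rewrite in_itv /= => /andP[gq qf].
    have [r] := rat_in_itvoo qf; rewrite in_itv /= => /andP[qr rf].
    exists (pickle (q, r)); first by [].
    by rewrite /A pickleK qr.
exact: strict_of_le_gap qr_lt ngap.
Qed.

Lemma strict_mul_indic_lt h k : L h -> L k -> ~ null [set w | h w < k w] ->
  strict (k \* \1_[set w | h w < k w]) (h \* \1_[set w | h w < k w]).
Proof.
move=> Lh Lk; set B := [set w | h w < k w] => nB.
have FB : F B by exact: (sigma_lt sF).
have LB u : L u -> L (u \* \1_B) by move=> Lu; rewrite mul_indicE; exact: Lglue.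
apply: strict_of_le (LB _ Lk) (LB _ Lh) _ _ => [w|].
  by rewrite /= indicE; case: (boolP (w \in B)) => [/set_mem/ltW|_]; rewrite ?mulr1 ?mulr0.
suff -> : [set w | (h \* \1_B) w < (k \* \1_B) w] = B by [].
apply/seteqP; split=> w /=; rewrite indicE.
  by case: (boolP (w \in B)) => [/set_mem //|_]; rewrite !mulr0 ltxx.
by move=> Bw; rewrite mem_set // !mulr1.
Qed.

Lemma pref_setU f g A B : F A -> F B -> A `&` B = set0 -> L f -> L g ->
  pref (f \* \1_A) (g \* \1_A) -> pref (f \* \1_B) (g \* \1_B) ->
  pref (f \* \1_(A `|` B)) (g \* \1_(A `|` B)).
Proof.
move=> FA FB AB0 Lf Lg; rewrite !mul_indicE => fgA fgB.
have LfB : L (glue f B (cst 0)) by exact: Lglue.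
have LgA : L (glue g A (cst 0)) by exact: Lglue.
have swap : glue g A (glue f B (cst 0)) = glue f B (glue g A (cst 0)).
  apply/funext => w; rewrite !glueE.
  case: (boolP (w \in A)) => [/set_mem wA|//]; case: (boolP (w \in B)) => [/set_mem wB|//].
  by have : (A `&` B) w by []; rewrite AB0.
rewrite [in X in pref _ X]setUC !glueU.
apply: (pref_trans (g := glue g A (glue f B (cst 0)))); try exact: Lglue.
  exact: (HST FA Lf Lg (Lcst 0) LfB fgA).
by rewrite swap; exact: (HST FB Lf Lg (Lcst 0) LgA fgB).
Qed.

Lemma pref_bigcup f g (A : nat -> set Omega) : (forall n, F (A n)) -> trivIset setT A ->
  L f -> L g -> (forall n, pref (f \* \1_(A n)) (g \* \1_(A n))) ->
  pref (f \* \1_(\bigcup_n A n)) (g \* \1_(\bigcup_n A n)).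
Proof.
move=> FA /trivIsetP tA Lf Lg fgA; set U := \bigcup_n A n.
have FU : F U by exact: (sigma_bigcup sF).
have FAlt m : F (\bigcup_(i < m) A i).
  by elim: m => [|m IH]; rewrite ?bigcup_lt0 ?bigcup_ltS; [exact: (sigma0 sF)|exact: (sigmaU sF)].
have fgAlt m : pref (f \* \1_(\bigcup_(i < m) A i)) (g \* \1_(\bigcup_(i < m) A i)).
  elim: m => [|m IH]; first by rewrite bigcup_lt0 !mul_indicE !glue_set0; exact: pref_refl.
  rewrite bigcup_ltS; apply: pref_setU => //.
  apply/seteqP; split=> // w [[i /= im Aiw] Amw].
  by have : (A i `&` A m) w by []; rewrite tA // ltn_eqF.
have [[_ [Mf fM]] [_ [Mg gM]]] := (Lf, Lg).
have LgU : L (g \* \1_U) by rewrite mul_indicE; exact: Lglue.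
have gUM w : `|(g \* \1_U) w| <= Mg.
  by rewrite /= indicE; case: (_ \in _); rewrite ?mulr1 ?mulr0 ?normr0 ?gM // (le_trans _ (gM w)).
have fUE : glue f U (g \* \1_U) = f \* \1_U.
  by apply/funext => w; rewrite glueE /= indicE; case: (w \in U); rewrite ?mulr1 ?mulr0.
rewrite -fUE; apply: cvg_pref_l (bounded_cvg_glue A fM gUM) _ => //.
- by move=> m; exact: Lglue.
- exact: Lglue.
- move=> m; have gE : glue g (\bigcup_(i < m) A i) (g \* \1_U) = g \* \1_U.
    apply/funext => w; rewrite glueE /= indicE.
    case: (boolP (w \in _)) => // /set_mem [i _ Aiw].
    by rewrite mem_set ?mulr1 //; exists i.
  rewrite -{2}gE; apply: (HST (FAlt m) Lf Lg (Lcst 0) LgU).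
  by rewrite -!mul_indicE.
Qed.

Lemma pref_split f g A B : F A -> F B -> L f -> L g ->
  pref (f \* \1_(A `&` B)) (g \* \1_(A `&` B)) -> pref (f \* \1_(A `\` B)) (g \* \1_(A `\` B)) ->
  pref (f \* \1_A) (g \* \1_A).
Proof.
move=> FA FB Lf Lg fgI fgD; rewrite -(setUIDK A B); apply: pref_setU => //.
- exact: (sigmaI sF).
- exact: (sigmaD sF).
- by apply/seteqP; split=> // w [[_ ?] [_ ?]].
Qed.

Fixpoint running_max (R : realType) (Omega : Type) (hs : nat -> Omega -> R) n : Omega -> R :=
  if n is n'.+1 then running_max hs n' \max hs n else hs 0.

(** * Conditional means *)

Section ConditionalMean.
Variables (G : set (set Omega)) (f : Omega -> R).
Hypotheses (sG : sigma_algebra setT G) (GF : G `<=` F) (Lf : L f).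
Local Notation LG := (@Linf R Omega G).
Let LGcst x : LG (cst x). Proof. exact: Linf_cst. Qed.
Let LGF g : LG g -> L g. Proof. exact: Linf_sub. Qed.
Let Lmul g A : G A -> L g -> L (g \* \1_A).
Proof. by move=> GA Lg; rewrite mul_indicE; apply: Lglue => //; exact: GF. Qed.
Local Hint Resolve LGcst : core.

Definition submean : set (Omega -> R) :=
  [set h | LG h /\ forall A, G A -> pref (f \* \1_A) (h \* \1_A)].

Lemma submean_max h1 h2 : submean h1 -> submean h2 -> submean (h1 \max h2).
Proof.
move=> [LG1 fh1] [LG2 fh2]; have LGmax := Linf_max sG LG1 LG2.
split=> // A GA; set B := [set w | h1 w < h2 w].
have GB : G B by exact: (sigma_lt sG).
apply: pref_split (GF GA) (GF GB) Lf (LGF LGmax) _ _.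
  have -> : (h1 \max h2) \* \1_(A `&` B) = h2 \* \1_(A `&` B).
    apply/funext => w; rewrite /= indicE.
    by case: (boolP (w \in _)) => [/set_mem [_ /= lt12]|_]; rewrite ?mulr0 // /Order.max lt12.
  by apply: fh2; exact: (sigmaI sG).
have -> : (h1 \max h2) \* \1_(A `\` B) = h1 \* \1_(A `\` B).
  apply/funext => w; rewrite /= indicE.
  case: (boolP (w \in _)) => [/set_mem [_ /= nlt12]|_]; rewrite ?mulr0 //.
  by rewrite /Order.max; case: ifP => // lt12; case: nlt12.
by apply: fh1; exact: (sigmaD sG).
Qed.

Lemma submean_min_cst h c : submean h -> submean (h \min cst c).
Proof.
move=> [LGh fh]; have LGmin := Linf_min sG LGh (LGcst c); split=> // A GA.
have LhA : L (h \* \1_A) by apply: Lmul => //; exact: LGF.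
have LmA : L ((h \min cst c) \* \1_A) by apply: Lmul => //; exact: LGF.
apply: (pref_trans (g := h \* \1_A)) (fh A GA) _ => //; first exact: Lmul.
by apply: pref_of_le => //; apply: mul_indic_le => w; rewrite /= ge_min lexx.
Qed.

Lemma submean_cst c : (forall w, c <= f w) -> submean (cst c).
Proof.
move=> cf; split=> // A GA.
by apply: pref_of_le; [exact: Lmul|exact: Lmul|exact: mul_indic_le].
Qed.

Lemma submean_null_gt h c : (forall w, f w <= c) -> submean h -> null [set w | c < h w].
Proof.
move=> fc [LGh fh]; set B := [set w | c < h w].
have GB : G B by exact: (sigma_lt sG (LGcst c) LGh).
have [LhB LcB LfB] : [/\ L (h \* \1_B), L (cst c \* \1_B) & L (f \* \1_B)].
  by split; apply: Lmul => //; exact: LGF.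
apply: contrapT => /(strict_mul_indic_lt (Lcst c) (LGF LGh)) [_]; apply.
apply: (pref_trans (g := f \* \1_B)) (fh B GB) => //.
by apply: pref_of_le => //; exact: mul_indic_le.
Qed.

Lemma submean_cvg (hs : nat -> Omega -> R) g : (forall n, submean (hs n)) -> LG g ->
  bounded_cvg hs g -> submean g.
Proof.
move=> shs LGg cv; split=> // A GA.
apply: cvg_pref_r (bounded_cvg_mul_indic A cv) _.
- by move=> n; apply: Lmul => //; apply: LGF; case: (shs n).
- by apply: Lmul => //; exact: LGF.
- exact: Lmul.
- by move=> n; case: (shs n) => _; apply.
Qed.

Lemma chisini_mean_null_lt g g' : chisini_mean pref f G g -> chisini_mean pref f G g' ->
  null [set w | g' w < g w].
Proof.
move=> [LGg fg] [LGg' fg']; set B := [set w | g' w < g w].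
have GB : G B by exact: (sigma_lt sG).
have [LgB Lg'B LfB] : [/\ L (g \* \1_B), L (g' \* \1_B) & L (f \* \1_B)].
  by split; apply: Lmul => //; exact: LGF.
apply: contrapT => /(strict_mul_indic_lt (LGF LGg') (LGF LGg)) [_]; apply.
exact: (pref_trans (g := f \* \1_B)) (fg' B GB).2 (fg B GB).1.
Qed.

Lemma chisini_mean_unique g g' : chisini_mean pref f G g -> chisini_mean pref f G g' ->
  null [set w | g w != g' w].
Proof.
move=> mg mg'.
have -> : [set w | g w != g' w] = [set w | g' w < g w] `|` [set w | g w < g' w].
  apply/seteqP; split=> w /=; first by rewrite neq_lt => /orP[lt|lt]; [right|left].
  by case=> lt; rewrite neq_lt lt ?orbT.
by apply: null_setU; exact: chisini_mean_null_lt.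
Qed.

Lemma chisini_mean_null_setT : null setT -> chisini_mean pref f G (cst 0).
Proof.
move=> nT0; split=> // A GA.
have [LfA L0A] : L (f \* \1_A) /\ L (cst 0 \* \1_A) by split; exact: Lmul.
by have := null_glue nT0 LfA L0A; rewrite glue_setT.
Qed.

Section NonNull.
Hypothesis nT : ~ null setT.

Lemma strict_cst (x y : R) : y < x -> strict (cst x) (cst y).
Proof. by move=> yx; have := HSM (sigmaT sF) nT (Lcst 0) yx; rewrite !glue_setT. Qed.

Lemma sim_cst_eq (x y : R) : sim (cst x) (cst y) -> x = y.
Proof.
move=> [xy yx]; apply/eqP; rewrite eq_le !leNgt.
by apply/andP; split; apply/negP => /strict_cst [_]; apply.
Qed.

Lemma certainty_equivalent h : L h -> exists c, sim h (cst c).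
Proof.
move=> Lh; have [_ [M hM]] := Lh.
have [h_le h_ge] : (forall w, h w <= M) /\ (forall w, - M <= h w).
  by split=> w; move: (hM w); rewrite ler_norml => /andP[].
pose S := [set x : R | x <= M /\ pref h (cst x)].
have S_negM : S (- M).
  by split; [have := h_ge point; have := h_le point; lra|exact: pref_of_le].
have supS : has_sup S by split; [exists (- M)|exists M => x []].
have absN1 : `|-1| <= 1 :> R by rewrite normrN1.
have abs1 : `|1| <= 1 :> R by rewrite normr1.
exists (sup S); split.
- apply: contrapT => /(not_pref_strict Lh (Lcst _)) sup_h.
  have cv := bounded_cvg_cst_shift Omega (sup S) absN1.
  have [n [_ nh]] := PC_strict_r (fun=> Lcst _) (Lcst _) Lh cv sup_h.
  have : sup S <= sup S + -1 * n.+1%:R^-1.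
    apply: ge_sup; first by exists (- M).
    move=> x [_ hx]; rewrite leNgt; apply/negP => ltx; apply: nh.
    apply: (pref_trans (g := cst x)) hx _ => //.
    by apply: pref_of_le => // w; exact: ltW.
  by rewrite mulN1r lerDl oppr_ge0 leNgt invr_gt0 ltr0n.
- apply: contrapT => /(not_pref_strict (Lcst _) Lh) h_sup.
  have cv := bounded_cvg_cst_shift Omega (sup S) abs1.
  have [n [hd nd]] := PC_strict_l (fun=> Lcst _) (Lcst _) Lh cv h_sup.
  set d := _ + _ in hd nd.
  have supd : sup S < d by rewrite /d mul1r ltrDl invr_gt0 ltr0n.
  have [dM|Md] := leP d M; first by move: supd; rewrite ltNge sup_upper_bound.
  by apply: nd; apply: (pref_trans (g := cst M)) => //; apply: pref_of_le => // w; exact: ltW.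
Qed.

Definition ceq (h : Omega -> R) : R := xget 0 [set c | sim h (cst c)].

Lemma ceq_sim h : L h -> sim h (cst (ceq h)).
Proof. by move=> /certainty_equivalent/(xgetPex 0). Qed.

Lemma ceq_cst x : ceq (cst x) = x.
Proof. by have [? ?] := ceq_sim (Lcst x); apply/esym/sim_cst_eq. Qed.

Lemma ceq_le h h' : L h -> L h' -> pref h h' -> ceq h' <= ceq h.
Proof.
move=> Lh Lh' hh'; rewrite leNgt; apply/negP => /strict_cst [_]; apply.
apply: (pref_trans (g := h)) (ceq_sim Lh).2 _ => //.
exact: (pref_trans (g := h')) hh' (ceq_sim Lh').1.
Qed.

Lemma ceq_lt h h' : L h -> L h' -> strict h h' -> ceq h' < ceq h.
Proof.
move=> Lh Lh' [_ nhh']; rewrite ltNge; apply/negP => le; apply: nhh'.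
apply: (pref_trans (g := cst (ceq h'))) (ceq_sim Lh').1 _ => //.
apply: (pref_trans (g := cst (ceq h))) _ (ceq_sim Lh).2 => //.
exact: pref_of_le.
Qed.

Definition weight (B : set Omega) : R := ceq \1_B.

Lemma weight_set0 : weight set0 = 0.
Proof.
rewrite /weight -[RHS](ceq_cst 0); congr ceq.
by apply/funext => w; rewrite indicE in_set0.
Qed.

Lemma weight_le1 B : F B -> weight B <= 1.
Proof.
move=> FB; have LB : L \1_B := Linf_indic _ sF FB; rewrite -(ceq_cst 1); apply: ceq_le => //.
by apply: pref_of_le => // w; rewrite indicE; case: (_ \in _).
Qed.

Lemma weight_gt0 B : F B -> ~ null B -> 0 < weight B.
Proof.
move=> FB nB; have LB : L \1_B := Linf_indic _ sF FB.
rewrite -(ceq_cst 0); apply: ceq_lt => //.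
have := HSM FB nB (Lcst 0) (@ltr01 R).
have -> : glue (Defs.cst 1) B (cst 0) = \1_B :> (Omega -> R).
  by apply/funext => w; rewrite glueE indicE; case: (_ \in _).
suff -> : glue (Defs.cst 0) B (cst 0) = cst (0 : R) by [].
by apply/funext => w; rewrite glueE; case: (_ \in _).
Qed.

Lemma weight_trivIset_small (B : nat -> set Omega) : (forall n, F (B n)) ->
  trivIset setT B -> forall d, 0 < d -> exists n, weight (B n) < d.
Proof.
move=> FB /trivIsetP tB d d0.
have cv : bounded_cvg (fun n => \1_(B n)) (cst 0 : Omega -> R).
  split=> [|w].
    by exists 1 => n w; rewrite indicE; case: (_ \in _); rewrite ?normr1 ?normr0.
  have [[k Bkw]|nB] := pselect (exists k, B k w).
    apply: (@cvg_eventually_cst _ _ _ k.+1) => n kn; rewrite indicE.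
    case: (boolP (w \in B n)) => // /set_mem Bnw.
    by have : (B k `&` B n) w by []; rewrite tB // ltn_eqF.
  apply: (@cvg_eventually_cst _ _ _ 0) => n _; rewrite indicE.
  by case: (boolP (w \in B n)) => // /set_mem Bnw; exfalso; apply: nB; exists n.
have LB n : L \1_(B n) by exact: Linf_indic.
have [n dBn] := PC_strict_l LB (Lcst 0) (Lcst d) cv (strict_cst d0).
by exists n; rewrite -[d](ceq_cst d); exact: ceq_lt dBn.
Qed.

Section Exhaustion.
Variable K : set (set Omega).
Hypotheses (KG : K `<=` G) (K0 : K set0).
Hypothesis K_bigcup : forall B : nat -> set Omega,
  (forall n, K (B n)) -> trivIset setT B -> K (\bigcup_n B n).

Let KF B : K B -> F B. Proof. by move=> /KG /GF. Qed.

Let weights X := [set weight B | B in [set B | K B /\ B `<=` X]].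

Let has_sup_weights X : has_sup (weights X).
Proof.
split; first by exists (weight set0), set0 => //; split=> //; exact: sub0set.
by exists 1 => _ [B [KB _] <-]; exact: weight_le1 (KF KB).
Qed.

Let greedy_exists X : exists B, [/\ K B, B `<=` X & sup (weights X) <= 2 * weight B].
Proof.
have [s0|s0] := leP (sup (weights X)) 0.
  by exists set0; split=> //; rewrite weight_set0 mulr0.
have [_ [B [KB BX] <-] hB] := sup_adherent (divr_gt0 s0 (ltr0n _ 2)) (has_sup_weights X).
by exists B; split=> //; move: hB; lra.
Qed.

Let greedy X := xget set0 [set B | [/\ K B, B `<=` X & sup (weights X) <= 2 * weight B]].

Let greedyP X : [/\ K (greedy X), greedy X `<=` X & sup (weights X) <= 2 * weight (greedy X)].
Proof. exact: (xgetPex set0 (greedy_exists X)). Qed.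

Let residual A n := iter n (fun X => X `\` greedy X) A.

Let residual_decr A n m : (n <= m)%N -> residual A m `<=` residual A n.
Proof.
move=> /subnK <-; elim: (m - n)%N => [//|k IH] w.
by rewrite addSn /residual iterS => -[/IH].
Qed.

(* Greedily remove an event of K carrying at least half of the available weight; as
   the weights of the removed (disjoint) events tend to 0, no non-null event of G can
   remain. *)
Lemma exhaustion A : G A ->
  (forall A', G A' -> A' `<=` A -> ~ null A' -> exists2 B, K B & B `<=` A' /\ ~ null B) ->
  exists2 U, K U & U `<=` A /\ null (A `\` U).
Proof.
move=> GA Kex; pose B n := greedy (residual A n).
have KB n : K (B n) by case: (greedyP (residual A n)).
have BR n : B n `<=` residual A n by case: (greedyP (residual A n)).
have trivB : trivIset setT B.
  apply: ltn_trivIset => n m mn; apply/seteqP; split=> // w [Bmw Bnw].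
  by have [_] := residual_decr (A := A) mn (BR n w Bnw); apply.
have KU : K (\bigcup_n B n) by exact: K_bigcup.
exists (\bigcup_n B n) => //; split.
  by move=> w [n _ /BR /(residual_decr (A := A) (leq0n n))].
apply: contrapT => nAU.
have [C KC [CAU nC]] := Kex _ (sigmaD sG GA (KG KU)) (@subDsetl _ _ _) nAU.
have CR n : C `<=` residual A n.
  elim: n => [|n IH] w Cw; first by case: (CAU w Cw).
  by split; [exact: IH|move=> Bnw; case: (CAU w Cw) => _; apply; exists n].
have wC := weight_gt0 (KF KC) nC.
have [n small] := weight_trivIset_small (fun n => KF (KB n)) trivB (divr_gt0 wC (ltr0n _ 2)).
have : weight C <= sup (weights (residual A n)).
  by apply: (sup_upper_bound (has_sup_weights _)); exists C.
have [_ _] := greedyP (residual A n); rewrite -/(B n).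
by move: small; lra.
Qed.

End Exhaustion.

Section Existence.
Variable M : R.
Hypothesis fM : forall w, `|f w| <= M.

Let fleM w : f w <= M. Proof. by move: (fM w); rewrite ler_norml => /andP[]. Qed.
Let M_ge0 : 0 <= M. Proof. exact: le_trans (normr_ge0 _) (fM point). Qed.

Definition bounded_submean h := submean h /\ forall w, - M <= h w <= M.
Local Notation bsubmean := bounded_submean.

Let Lbsubmean h : bsubmean h -> L h. Proof. by case=> -[/LGF]. Qed.

Let bsubmean_max h1 h2 : bsubmean h1 -> bsubmean h2 -> bsubmean (h1 \max h2).
Proof.
move=> [s1 b1] [s2 b2]; split=> [|w]; first exact: submean_max.
by rewrite /= /Order.max; case: ifP.
Qed.

Let bsubmean_cst : bsubmean (cst (- M)).
Proof.
split=> [|w]; first by apply: submean_cst => w; move: (fM w); rewrite ler_norml => /andP[].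
by rewrite /= lexx /=; have := M_ge0; lra.
Qed.

Let ceq_bsubmean_le h : bsubmean h -> ceq h <= M.
Proof.
move=> bh; rewrite -(ceq_cst M); apply: ceq_le => //; first exact: Lbsubmean.
by apply: pref_of_le => //; [exact: Lbsubmean|move=> w; case: bh => _ /(_ w) /andP[]].
Qed.

Let bsubmean_sup (hs : nat -> Omega -> R) : (forall n, bsubmean (hs n)) ->
  exists2 g, bsubmean g & forall n w, hs n w <= g w.
Proof.
move=> bhs; pose ks := running_max hs.
have bks n : bsubmean (ks n) by elim: n => [|n IH] /=; [exact: bhs|exact: bsubmean_max].
have ksM n w : - M <= ks n w <= M by case: (bks n) => _; apply.
have hks n w : hs n w <= ks n w by case: n => [|n] //=; rewrite le_max lexx orbT.
have ks_nd w : nondecreasing_seq (ks ^~ w).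
  by apply/nondecreasing_seqP => n /=; rewrite le_max lexx.
have ks_ub w : has_ubound (range (ks ^~ w)).
  by exists M => _ [n _ <-]; case/andP: (ksM n w).
pose g w := sup (range (ks ^~ w)).
have ksg n w : ks n w <= g w by apply: sup_upper_bound; [split=> //; exists (ks 0 w), 0|exists n].
have gM w : - M <= g w <= M.
  apply/andP; split; first by apply: le_trans (ksg 0 w); case/andP: (ksM 0 w).
  by apply: ge_sup; [exists (ks 0 w), 0|move=> _ [n _ <-]; case/andP: (ksM n w)].
have cvks : bounded_cvg ks g.
  split=> [|w]; last exact: nondecreasing_cvgn.
  by exists M => n w; rewrite ler_norml ksM.
have LGg : LG g.
  apply: (Linf_cvg sG (fs := ks) (M := M)) cvks.2 => [n|w]; first by case: (bks n) => -[].
  by rewrite ler_norml gM.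
exists g; first by split=> //; exact: submean_cvg (fun n => (bks n).1) LGg cvks.
by move=> n w; exact: le_trans (hks n w) (ksg n w).
Qed.

Lemma exists_ceq_max : exists2 g, bsubmean g & forall h, bsubmean h -> ceq h <= ceq g.
Proof.
pose V := [set ceq h | h in bsubmean].
have supV : has_sup V.
  split; first by exists (ceq (cst (- M))), (cst (- M)); first exact: bsubmean_cst.
  by exists M => _ [h bh <-]; exact: ceq_bsubmean_le.
have hn n : exists h, bsubmean h /\ sup V - n.+1%:R^-1 < ceq h.
  have e_gt0 : 0 < n.+1%:R^-1 :> R by rewrite invr_gt0 ltr0n.
  by have [_ [h bh <-] lt] := sup_adherent e_gt0 supV; exists h.
have [hs bhs] := choice hn.
have [g bg hsg] := bsubmean_sup (fun n => (bhs n).1).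
have Lg := Lbsubmean bg.
exists g => // h bh.
apply: le_trans (_ : sup V <= _); first by apply: (sup_upper_bound supV); exists h.
apply: le_of_harmonic => n; apply: ltW; apply: lt_le_trans (bhs n).2 _.
have Lhs := Lbsubmean (bhs n).1.
by apply: ceq_le => //; apply: pref_of_le => //; exact: hsg.
Qed.

Section Maximal.
Variable g : Omega -> R.
Hypotheses (bg : bsubmean g) (gmax : forall h, bsubmean h -> ceq h <= ceq g).

Let LGg : LG g. Proof. by case: bg => -[]. Qed.
Let Lg : L g. Proof. exact: LGF. Qed.
Let Lge e : L (g \+ cst e). Proof. exact/LGF/Linf_add. Qed.

(* Truncated at M, the raised function is a bounded submean above g, so by maximality
   it exceeds g only on a null set; and it exceeds M only on a null set as f <= M. *)
Lemma maximal_submean_no_gain e A : 0 < e -> G A -> ~ null A ->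
  ~ submean (glue (g \+ cst e) A g).
Proof.
move=> e0 GA nA sh; set h := glue (g \+ cst e) A g in sh.
have [_ gM] := bg.
have gh w : g w <= h w by rewrite /h glueE; case: (_ \in _) => //=; rewrite lerDl ltW.
have bh' : bsubmean (h \min cst M).
  split=> [|w]; first exact: submean_min_cst.
  rewrite /= ge_min lexx orbT andbT le_min.
  by have := gh w; case/andP: (gM w) => ? ? ?; apply/andP; split; lra.
have gh' w : g w <= (h \min cst M) w by rewrite /= le_min gh; case/andP: (gM w).
have null_gain : null [set w | g w < (h \min cst M) w].
  apply: contrapT => ngain.
  have := ceq_lt (Lbsubmean bh') Lg (strict_of_le (Lbsubmean bh') Lg gh' ngain).
  by rewrite ltNge gmax.
have null_above := submean_null_gt fleM sh.
apply: nA; apply: null_subset (null_setU null_gain null_above) (GF GA) _.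
move=> w Aw; have [gwM|Mgw] := ltP (g w) M.
  by left; rewrite /= lt_min gwM andbT /h glueE mem_set //= ltrDl.
by right; rewrite /= /h glueE mem_set //=; lra.
Qed.

Lemma maximal_submean_nonnull_above e A : 0 < e -> G A -> ~ null A ->
  exists B, [/\ G B, B `<=` A, ~ null B & pref ((g \+ cst e) \* \1_B) (f \* \1_B)].
Proof.
move=> e0 GA nA; set h := glue (g \+ cst e) A g.
have LGh : LG h by apply: Linf_glue => //; exact: Linf_add.
have [B GB nfhB] : exists2 B, G B & ~ pref (f \* \1_B) (h \* \1_B).
  apply: contrapT => nex; apply: (maximal_submean_no_gain e0 GA nA); split=> // B GB.
  by apply: contrapT => nfhB; apply: nex; exists B.
have GBA : G (B `&` A) by exact: (sigmaI sG).
have [LfBA LgBA] : L (f \* \1_(B `&` A)) /\ L ((g \+ cst e) \* \1_(B `&` A)).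
  by split; exact: Lmul.
have nfgBA : ~ pref (f \* \1_(B `&` A)) ((g \+ cst e) \* \1_(B `&` A)).
  move=> fgBA; apply: nfhB; apply: pref_split (GF GB) (GF GA) Lf (LGF LGh) _ _.
    suff -> : h \* \1_(B `&` A) = (g \+ cst e) \* \1_(B `&` A) by [].
    apply/funext => w; rewrite /= !indicE /h glueE.
    by case: (boolP (w \in B `&` A)) => [/set_mem [_ /mem_set ->]|_]; rewrite ?mulr0.
  suff -> : h \* \1_(B `\` A) = g \* \1_(B `\` A).
    by case: bg => -[_ gsub] _; apply: gsub; exact: (sigmaD sG).
  apply/funext => w; rewrite /= !indicE /h glueE.
  case: (boolP (w \in B `\` A)) => [/set_mem [_ nAw]|_]; last by rewrite !mulr0.
  by rewrite memNset.
exists (B `&` A); split; [exact: GBA|by move=> w []| |].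
  move=> nBA; apply: nfgBA; rewrite !mul_indicE in LfBA LgBA *.
  apply: (pref_trans (g := cst 0)) => //.
    exact: (null_glue nBA Lf (Lcst 0)).1.
  exact: (null_glue nBA (Lge e) (Lcst 0)).2.
by have [] := not_pref_strict LfBA LgBA nfgBA.
Qed.

Lemma maximal_submean_eps_above e A : 0 < e -> G A -> pref ((g \+ cst e) \* \1_A) (f \* \1_A).
Proof.
move=> e0 GA; pose K := [set B | G B /\ pref ((g \+ cst e) \* \1_B) (f \* \1_B)].
have [U [GU geU] [UA nAU]] : exists2 U, K U & U `<=` A /\ null (A `\` U).
  apply: (exhaustion (K := K)) => //.
  - by move=> B [].
  - split; first exact: (sigma0 sG).
    by rewrite !mul_indicE !glue_set0; exact: pref_refl.
  - move=> B KB tB; split; first by apply: (sigma_bigcup sG) => n; case: (KB n).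
    by apply: pref_bigcup => // n; case: (KB n) => // /GF.
  - move=> A' GA' _ nA'; have [B [GB BA' nB geB]] := maximal_submean_nonnull_above e0 GA' nA'.
    by exists B.
have [LgA LgU LfA LfU] : [/\ L ((g \+ cst e) \* \1_A), L ((g \+ cst e) \* \1_U),
  L (f \* \1_A) & L (f \* \1_U)] by split; exact: Lmul.
apply: (pref_trans (g := (g \+ cst e) \* \1_U)) => //.
  by rewrite [X in pref X _](mul_indic_glueD _ UA); exact: (null_glue nAU LgA LgU).1.
apply: (pref_trans (g := f \* \1_U)) => //.
by rewrite [X in pref _ X](mul_indic_glueD _ UA); exact: (null_glue nAU LfA LfU).2.
Qed.

Lemma maximal_submean_chisini_mean : chisini_mean pref f G g.
Proof.
split=> // A GA; split; first by case: bg => -[_ gsub] _; exact: gsub.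
have [_ gM] := bg.
have gabs w : `|g w| <= M by rewrite ler_norml gM.
have cv : bounded_cvg (fun n => g \+ cst (1 * n.+1%:R^-1)) g.
  by apply: bounded_cvg_shift gabs _; rewrite normr1.
apply: cvg_pref_l (bounded_cvg_mul_indic A cv) _.
- by move=> n; exact: Lmul.
- exact: Lmul.
- exact: Lmul.
- by move=> n; apply: maximal_submean_eps_above => //; rewrite mul1r invr_gt0 ltr0n.
Qed.

End Maximal.

End Existence.

Lemma chisini_mean_exists : chisini_mean pref f G !=set0.
Proof.
have [_ [M fM]] := Lf; have [g bg gmax] := exists_ceq_max fM.
by exists g; exact: maximal_submean_chisini_mean bg gmax.
Qed.

End NonNull.

End ConditionalMean.

End Preference.

Lemma Linf_of_empty (R : realType) (Omega : Type) (H : set (set Omega)) (h : Omega -> R) :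
  H set0 -> (Omega -> False) -> Linf H h.
Proof.
move=> H0 empty; split; last by exists 0 => w; case: (empty w).
by move=> B _; suff -> : h @^-1` B = set0 by []; apply/seteqP; split=> w; case: (empty w).
Qed.

Lemma chisini_mean_empty_carrier (R : realType) (Omega : Type) (F G : set (set Omega))
    (pref : (Omega -> R) -> (Omega -> R) -> Prop) (f : Omega -> R) :
  sigma_algebra setT F -> sigma_algebra setT G -> preference_order F pref ->
  (Omega -> False) ->
  chisini_mean pref f G !=set0 /\
  (forall g g' : Omega -> R, null_events F pref [set w | g w != g' w]).
Proof.
move=> [F0 _ _] [G0 _ _] PO empty.
have all_eq (h k : Omega -> R) : h = k by apply/funext => w; case: (empty w).
have all_set0 (S : set Omega) : S = set0 by apply/funext => w; case: (empty w).
have refl h : pref h h by have L := Linf_of_empty h F0 empty; case: (PO.1 h h L L).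
split.
  exists (cst 0); split=> [|A _]; first exact: Linf_of_empty.
  by rewrite (all_eq (cst 0 \* \1_A) (f \* \1_A)); split; exact: refl.
move=> g g'; rewrite (all_set0 [set w | g w != g' w]); split=> // h k _ _.
by rewrite glue_set0; split; exact: refl.
Qed.

(* The measure-theory library needs a pointed carrier; the dummy argument makes the
   instance depend on the chosen point. *)
Section PointedCarrier.
Variables (Omega : Type) (w0 : Omega).
Definition pointed_at (_ : Omega) : Type := Omega.
HB.instance Definition _ := gen_eqMixin (pointed_at w0).
HB.instance Definition _ := gen_choiceMixin (pointed_at w0).
HB.instance Definition _ := isPointed.Build (pointed_at w0) w0.
End PointedCarrier.

Theorem mainTheorem6 (R : realType) (Omega : Type)
  (F G : set (set Omega)) (pref : (Omega -> R) -> (Omega -> R) -> Prop)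
  (f : Omega -> R) :
  sigma_algebra setT F ->
  sigma_algebra setT G -> G `<=` F ->
  preference_order F pref -> SM F pref -> PC F pref -> ST F pref ->
  Linf F f ->
  chisini_mean pref f G !=set0 /\
  (forall g g', chisini_mean pref f G g -> chisini_mean pref f G g' ->
     null_events F pref [set w | g w != g' w]).
Proof.
move=> sF sG GF PO HSM HPC HST Lf.
have [[w0 _]|empty] := pselect (exists w : Omega, True); last first.
  have [ex nul] := chisini_mean_empty_carrier f sF sG PO (fun w => empty (ex_intro _ w I)).
  by split=> // g g' _ _; exact: nul.
pose Omega0 := pointed_at w0.
split; last by move=> g g'; exact: (@chisini_mean_unique _ Omega0 _ sF _ PO HSM HPC _ _ sG GF Lf).
have [nT|nT] := pselect (null_events F pref setT).
  by exists (cst 0); exact: (@chisini_mean_null_setT _ Omega0 _ sF _ _ _ sG GF Lf).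
exact: (@chisini_mean_exists _ Omega0 _ sF _ PO HSM HPC HST _ _ sG GF Lf).
Qed.
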